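(* There are no rational numbers (in particular, no integers) $x_1,x_2,x_3,d_1,d_2,d_3,L$ with $x_1,x_2,x_3,d_1,d_2,d_3>0$ such that $\operatorname{rank}N\le 2$, $\operatorname{rank}N_1=2$, $\operatorname{rank}N_2=2$, and $\tilde p_2=\tilde p_3=\dots=\tilde p_8=0$. Likewise there are no such positive rational numbers with $\operatorname{rank}N\le 2$, $\operatorname{rank}N_1=\operatorname{rank}N_2=2$ satisfying $p_1=p_2=p_3=0$.
   Context: Define $p_1=x_2^2+x_3^2-d_1^2$, $p_2=x_3^2+x_1^2-d_2^2$, $p_3=x_1^2+x_2^2-d_3^2$, and $\tilde p_2=p_1+p_2+p_3$, $\tilde p_3=d_1p_1+d_2p_2+d_3p_3$, $\tilde p_4=x_1p_1+x_2p_2+x_3p_3$, $\tilde p_5=x_1d_1p_1+x_2d_2p_2+x_3d_3p_3$, $\tilde p_6=x_1^2p_1+x_2^2p_2+x_3^2p_3$, $\tilde p_7=d_1^2p_1+d_2^2p_2+d_3^2p_3$, $\tilde p_8=x_1^2d_1^2p_1+x_2^2d_2^2p_2+x_3^2d_3^2p_3$. $N$ is the $3\times 7$ matrix whose $i$-th row is $(1,\ d_i,\ x_i,\ x_id_i,\ x_i^2,\ d_i^2,\ x_i^2d_i^2)$; $N_1$ is the $3\times 2$ matrix with rows $(1,d_i)$; $N_2$ is the $3\times 2$ matrix with rows $(1,x_i)$, $i=1,2,3$. Ranks are over $\mathbb{Q}$. *)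

From HB Require Import structures.
From mathcomp Require Import all_boot all_order all_algebra.
Set Implicit Arguments. Unset Strict Implicit. Unset Printing Implicit Defensive.
Import Order.TTheory GRing.Theory Num.Theory.
Local Open Scope ring_scope.

(* the function i |-> (a, b, c)_i on indices 'I_3 = {0,1,2} (i.e. 1,2,3 in the paper) *)
Definition vec3 (a b c : rat) (i : 'I_3) : rat :=
  match val i with 0%N => a | 1%N => b | _ => c end.

Section Polys.
Variables x1 x2 x3 d1 d2 d3 : rat.

Definition p1 : rat := x2 ^+ 2 + x3 ^+ 2 - d1 ^+ 2.
Definition p2 : rat := x3 ^+ 2 + x1 ^+ 2 - d2 ^+ 2.
Definition p3 : rat := x1 ^+ 2 + x2 ^+ 2 - d3 ^+ 2.

Definition pt2 : rat := p1 + p2 + p3.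
Definition pt3 : rat := d1 * p1 + d2 * p2 + d3 * p3.
Definition pt4 : rat := x1 * p1 + x2 * p2 + x3 * p3.
Definition pt5 : rat := x1 * d1 * p1 + x2 * d2 * p2 + x3 * d3 * p3.
Definition pt6 : rat := x1 ^+ 2 * p1 + x2 ^+ 2 * p2 + x3 ^+ 2 * p3.
Definition pt7 : rat := d1 ^+ 2 * p1 + d2 ^+ 2 * p2 + d3 ^+ 2 * p3.
Definition pt8 : rat :=
  x1 ^+ 2 * d1 ^+ 2 * p1 + x2 ^+ 2 * d2 ^+ 2 * p2 + x3 ^+ 2 * d3 ^+ 2 * p3.

Definition xv := vec3 x1 x2 x3.
Definition dv := vec3 d1 d2 d3.

Definition Nmx : 'M[rat]_(3, 7) :=
  \matrix_(i < 3, j < 7)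
    nth 0 [:: 1; dv i; xv i; xv i * dv i; xv i ^+ 2; dv i ^+ 2;
              xv i ^+ 2 * dv i ^+ 2] j.
Definition N1mx : 'M[rat]_(3, 2) := \matrix_(i < 3, j < 2) nth 0 [:: 1; dv i] j.
Definition N2mx : 'M[rat]_(3, 2) := \matrix_(i < 3, j < 2) nth 0 [:: 1; xv i] j.
End Polys.

From HB Require Import structures.
From mathcomp Require Import all_boot all_order all_algebra.
From mathcomp Require Import ring.
Set Implicit Arguments. Unset Strict Implicit. Unset Printing Implicit Defensive.
Import Order.TTheory GRing.Theory Num.Theory.
Local Open Scope ring_scope.

(* The obstruction is an irrationality: both systems force 2 x^2 = d^2 for
   some positive rationals x, d, i.e. sqrt 2 would be rational.
   - Rank.  Every 3x3 minor of N vanishes.  The minor on the columns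
     (1, d, d^2) is a Vandermonde determinant, so two of the d_i agree; the
     minor on the columns (1, d, x) says that the points (d_i, x_i) are
     collinear.  As rank N1 = 2 the d_i are not all equal, so two of the
     points (d_i, x_i) coincide and the third has a different d
     (lemma [coincident_cases]).
   - Algebra.  If points 1 and 2 coincide then p3 = 2 x1^2 - d3^2, which is
     nonzero by irrationality of sqrt 2, while
     (d3 - d1) p3 = pt3 - d1 pt2, so neither p1 = p2 = p3 = 0 nor
     pt2 = pt3 = 0 can hold ([coincident_systems_fail]).
   - Symmetry.  Both systems are invariant under the cyclic relabelling
     1 -> 2 -> 3 -> 1, which reduces the three cases to this one. *)

Lemma coprime_sqrt2_nat (n m : nat) : coprime n m -> (n ^ 2 != 2 * m ^ 2)%N.
Proof.
move=> co; apply/eqP => e.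
have two_n : (2 %| n)%N.
  by move: (dvdn_mulr (m ^ 2) (dvdnn 2)); rewrite -e Euclid_dvdX // andbT.
have two_m : (2 %| m)%N.
  have : (2 * 2 %| 2 * m ^ 2)%N by rewrite -e; exact: (dvdn_mul two_n two_n).
  by rewrite dvdn_pmul2l // Euclid_dvdX // andbT.
by move: co; rewrite /coprime => /eqP gcd1; move: (dvdn_gcd 2 n m); rewrite gcd1 two_n two_m.
Qed.

Lemma rat_sqrt2 (a b : rat) : a != 0 -> b ^+ 2 != 2 * a ^+ 2.
Proof.
move=> a0; apply/eqP => e.
set r := b / a.
have r2 : r ^+ 2 = 2 by rewrite expr_div_n e mulfK // expf_neq0.
have : (numq r ^+ 2)%:~R = (2 * denq r ^+ 2)%:~R :> rat.
  by rewrite rmorphXn /= numqE exprMn r2 rmorphM rmorphXn.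
move/intr_inj/(congr1 absz); rewrite abszM !abszX => /eqP.
by apply/negP; apply: coprime_sqrt2_nat (coprime_num_den r).
Qed.

Lemma minor_eq0 (F : fieldType) (k n : nat) (A : 'M[F]_(k, n)) (g : 'I_k -> 'I_n) :
  (\rank A < k)%N -> \det (colsub g A) = 0.
Proof.
move=> rk; apply/eqP; apply: contraTT rk => det_neq0; rewrite -leqNgt.
have unit_minor : colsub g A \in unitmx by rewrite unitmxE unitfE.
rewrite -[leqLHS](mxrank_unit unit_minor) -[A in colsub g A]mulmx1 -mulmx_colsub.
exact: mxrankM_maxl.
Qed.

(* Twice the signed area of the triangle with vertices (d_i, x_i); it vanishes
   iff the three points are collinear. *)
Definition area2 (R : comPzRingType) (x1 x2 x3 d1 d2 d3 : R) : R :=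
  (d2 - d1) * (x3 - x1) - (d3 - d1) * (x2 - x1).

Lemma det_affine3 (R : comPzRingType) (d x : 'I_3 -> R) :
  \det (\matrix_(i < 3, j < 3) nth 0 [:: 1; d i; x i] j)
  = area2 (x 0) (x 1) (x 2) (d 0) (d 1) (d 2).
Proof.
rewrite (expand_det_row _ 0) !big_ord_recl big_ord0 /cofactor.
rewrite !(expand_det_row _ 0) !big_ord_recl !big_ord0 /cofactor !det_mx11 !mxE /=.
have -> : lift 0 (0 : 'I_2) = 1 :> 'I_3 by apply: val_inj.
have -> : lift 0 (lift 0 (0 : 'I_1)) = 2 :> 'I_3 by apply: val_inj.
rewrite /area2; ring.
Qed.

Lemma area2_rot (R : comPzRingType) (x1 x2 x3 d1 d2 d3 : R) :
  area2 x2 x3 x1 d2 d3 d1 = area2 x1 x2 x3 d1 d2 d3.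
Proof. by rewrite /area2; ring. Qed.

Lemma area2_parabola (R : comPzRingType) (d1 d2 d3 : R) :
  area2 (d1 ^+ 2) (d2 ^+ 2) (d3 ^+ 2) d1 d2 d3 = (d2 - d1) * (d3 - d1) * (d3 - d2).
Proof. by rewrite /area2; ring. Qed.

Definition coincident (R : eqType) (x1 x2 d1 d2 d3 : R) : Prop :=
  [/\ d1 = d2, x1 = x2 & d3 != d1].

Lemma coincident_of_area2 (R : idomainType) (x1 x2 x3 d1 d2 d3 : R) :
  area2 x1 x2 x3 d1 d2 d3 = 0 -> d1 = d2 -> d3 != d1 -> coincident x1 x2 d1 d2 d3.
Proof.
move=> area0 d12 d31; split=> //.
have : (d3 - d1) * (x1 - x2) = 0 by rewrite -area0 /area2 -d12; ring.
by move/eqP; rewrite mulf_eq0 subr_eq0 (negbTE d31) subr_eq0 => /eqP.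
Qed.

Definition minor_cols (c : 'I_7) (j : 'I_3) : 'I_7 :=
  match val j with 0%N => 0 | 1%N => 1 | _ => c end.

Lemma Nmx_area2 (x1 x2 x3 d1 d2 d3 : rat) (c : 'I_7) :
  let N := Nmx x1 x2 x3 d1 d2 d3 in
  (\rank N <= 2)%N -> area2 (N 0 c) (N 1 c) (N 2 c) d1 d2 d3 = 0.
Proof.
move=> N rk; rewrite -(@minor_eq0 _ _ _ N (minor_cols c) rk).
rewrite -(det_affine3 (dv d1 d2 d3) (fun i => N i c)).
congr (\det _); apply/matrixP => i j; rewrite !mxE.
by case: j => [[|[|[|]]] ?] //=; rewrite mxE.
Qed.

Lemma rank_N1_const (d : rat) : (\rank (N1mx d d d) <= 1)%N.
Proof.
have -> : N1mx d d d = const_mx 1 *m \row_(j < 2) nth 0 [:: 1; d] j.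
  apply/matrixP => i j; rewrite !mxE big_ord1 !mxE mul1r.
  by rewrite /dv /vec3; case: (val i) => [|[|]].
exact: leq_trans (mxrankM_maxl _ _) (rank_leq_col _).
Qed.

Lemma coincident_cases (x1 x2 x3 d1 d2 d3 : rat) :
  (\rank (Nmx x1 x2 x3 d1 d2 d3) <= 2)%N -> \rank (N1mx d1 d2 d3) = 2%N ->
  [\/ coincident x1 x2 d1 d2 d3, coincident x2 x3 d2 d3 d1
    | coincident x3 x1 d3 d1 d2].
Proof.
move=> rk rk1.
have vdm := Nmx_area2 (Ordinal (isT : (5 < 7)%N)) rk.
have area0 := Nmx_area2 (Ordinal (isT : (2 < 7)%N)) rk.
rewrite !mxE /dv /xv /vec3 /= area2_parabola in vdm area0.
have not_const : ~ (d1 = d2 /\ d2 = d3).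
  by case=> d12 d23; move: rk1 (rank_N1_const d1); rewrite -d23 -d12 => ->.
have area0_rot : area2 x2 x3 x1 d2 d3 d1 = 0 by rewrite area2_rot.
have area0_rot2 : area2 x3 x1 x2 d3 d1 d2 = 0 by rewrite area2_rot.
move/eqP: vdm; rewrite !mulf_eq0 !subr_eq0 => /orP[/orP[] /eqP e | /eqP e];
  [apply: Or31 (coincident_of_area2 area0 (esym e) _)
  | apply: Or33 (coincident_of_area2 area0_rot2 e _)
  | apply: Or32 (coincident_of_area2 area0_rot (esym e) _)];
  by apply/eqP => e'; apply: not_const; split; congruence.
Qed.

Lemma coincident_p3_neq0 (x1 x2 d1 d2 d3 : rat) :
  x1 != 0 -> coincident x1 x2 d1 d2 d3 -> p3 x1 x2 d3 != 0.
Proof.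
move=> x10 [_ <- _]; rewrite /p3 subr_eq0 eq_sym.
by rewrite (_ : x1 ^+ 2 + x1 ^+ 2 = 2 * x1 ^+ 2) ?rat_sqrt2 //; ring.
Qed.

(* For coinciding points 1 and 2, (d3 - d1) p3 = pt3 - d1 pt2, so pt2 and pt3
   can only vanish together with p3. *)
Lemma coincident_pt_p3 (x1 x2 x3 d1 d2 d3 : rat) : coincident x1 x2 d1 d2 d3 ->
  pt2 x1 x2 x3 d1 d2 d3 = 0 -> pt3 x1 x2 x3 d1 d2 d3 = 0 -> p3 x1 x2 d3 = 0.
Proof.
move=> [d12 x12 d31] pt2_0 pt3_0.
have : (d3 - d1) * p3 x1 x2 d3 = pt3 x1 x2 x3 d1 d2 d3 - d1 * pt2 x1 x2 x3 d1 d2 d3.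
  by rewrite /pt3 /pt2 /p1 /p2 /p3 -d12 -x12; ring.
rewrite pt2_0 pt3_0 mulr0 subr0 => /eqP.
by rewrite mulf_eq0 subr_eq0 (negbTE d31) => /eqP.
Qed.

Lemma pt2_rot (x1 x2 x3 d1 d2 d3 : rat) :
  pt2 x2 x3 x1 d2 d3 d1 = pt2 x1 x2 x3 d1 d2 d3.
Proof. by rewrite /pt2 /p1 /p2 /p3; ring. Qed.

Lemma pt3_rot (x1 x2 x3 d1 d2 d3 : rat) :
  pt3 x2 x3 x1 d2 d3 d1 = pt3 x1 x2 x3 d1 d2 d3.
Proof. by rewrite /pt3 /p1 /p2 /p3; ring. Qed.

Definition systems_fail (x1 x2 x3 d1 d2 d3 : rat) : Prop :=
  ~ (pt2 x1 x2 x3 d1 d2 d3 = 0 /\ pt3 x1 x2 x3 d1 d2 d3 = 0) /\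
  ~ [/\ p1 x2 x3 d1 = 0, p2 x1 x3 d2 = 0 & p3 x1 x2 d3 = 0].

Lemma systems_fail_rot (x1 x2 x3 d1 d2 d3 : rat) :
  systems_fail x2 x3 x1 d2 d3 d1 -> systems_fail x1 x2 x3 d1 d2 d3.
Proof.
rewrite /systems_fail pt2_rot pt3_rot => -[no_pt no_p]; split=> // -[p1_0 p2_0 p3_0].
exact: no_p (And3 p2_0 p3_0 p1_0).
Qed.

Lemma coincident_systems_fail (x1 x2 x3 d1 d2 d3 : rat) :
  x1 != 0 -> coincident x1 x2 d1 d2 d3 -> systems_fail x1 x2 x3 d1 d2 d3.
Proof.
move=> x10 c; have /eqP p3_neq0 := coincident_p3_neq0 x10 c.
split=> [[pt2_0 pt3_0] | [_ _ p3_0]]; apply: p3_neq0 => //.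
exact: coincident_pt_p3 c pt2_0 pt3_0.
Qed.

Lemma rank_systems_fail (x1 x2 x3 d1 d2 d3 : rat) :
  [/\ x1 != 0, x2 != 0 & x3 != 0] ->
  (\rank (Nmx x1 x2 x3 d1 d2 d3) <= 2)%N -> \rank (N1mx d1 d2 d3) = 2%N ->
  systems_fail x1 x2 x3 d1 d2 d3.
Proof.
move=> [x10 x20 x30] rk rk1.
case: (coincident_cases rk rk1) => c.
- exact: coincident_systems_fail x10 c.
- by apply: systems_fail_rot; apply: coincident_systems_fail x20 c.
- by do 2 apply: systems_fail_rot; apply: coincident_systems_fail x30 c.
Qed.

Theorem theorem6p1 :
  (~ exists x1 x2 x3 d1 d2 d3 L : rat,
      [/\ 0 < x1, 0 < x2 & 0 < x3] /\ [/\ 0 < d1, 0 < d2 & 0 < d3] /\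
      [/\ (\rank (Nmx x1 x2 x3 d1 d2 d3) <= 2)%N,
          \rank (N1mx d1 d2 d3) = 2%N & \rank (N2mx x1 x2 x3) = 2%N] /\
      [/\ pt2 x1 x2 x3 d1 d2 d3 = 0, pt3 x1 x2 x3 d1 d2 d3 = 0,
          pt4 x1 x2 x3 d1 d2 d3 = 0 & pt5 x1 x2 x3 d1 d2 d3 = 0] /\
      [/\ pt6 x1 x2 x3 d1 d2 d3 = 0, pt7 x1 x2 x3 d1 d2 d3 = 0 &
          pt8 x1 x2 x3 d1 d2 d3 = 0])
  /\
  (~ exists x1 x2 x3 d1 d2 d3 L : rat,
      [/\ 0 < x1, 0 < x2 & 0 < x3] /\ [/\ 0 < d1, 0 < d2 & 0 < d3] /\
      [/\ (\rank (Nmx x1 x2 x3 d1 d2 d3) <= 2)%N,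
          \rank (N1mx d1 d2 d3) = 2%N & \rank (N2mx x1 x2 x3) = 2%N] /\
      [/\ p1 x2 x3 d1 = 0, p2 x1 x3 d2 = 0 & p3 x1 x2 d3 = 0]).
Proof.
split=> -[x1 [x2 [x3 [d1 [d2 [d3 [_ [[x1_gt0 x2_gt0 x3_gt0] [_ [[rk rk1 _] eqs]]]]]]]]]];
  have [no_pt no_p] := rank_systems_fail
    (And3 (lt0r_neq0 x1_gt0) (lt0r_neq0 x2_gt0) (lt0r_neq0 x3_gt0)) rk rk1.
- by case: eqs => -[pt2_0 pt3_0 _ _] _; apply: no_pt.
- exact: no_p.
Qed.
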